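(* Let $n\ge1$, $s\in\{1,\dots,n\}$, let $C\in\mathbb{R}^{n\times n}$ be symmetric positive definite, and let $x\in[0,1]^n$ with $\sum_{i=1}^n x_i=s$. Let $0\le t_1\le t_2\le\lambda_{\min}(C)$, and let $\nu^{t_1}$ and $\mu^{t_2}$ be the vectors of eigenvalues of $M_{t_1}(x)$ and $M_{t_2}(x)$, respectively, sorted in nonincreasing order. Then: (i) $\mu^{t_2}+t_2\mathbb{I}_s\succ\nu^{t_1}+t_1\mathbb{I}_s$; (ii) $\sum_{i=1}^{\ell}\mu^{t_2}_i+(t_2-t_1)\sum_{i=1}^{\ell}x^\downarrow_i\ge\sum_{i=1}^{\ell}\nu^{t_1}_i$ for each $\ell\in\{1,\dots,s\}$; (iii) $\mu^{t_2}_i+t_2-t_1\ge\nu^{t_1}_i$ for each $i\in\{1,\dots,s\}$.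
   Context: $\lambda_{\min}(C)$ is the smallest eigenvalue of $C$. For $0\le t\le\lambda_{\min}(C)$ let $A(t)\in\mathbb{R}^{n\times n}$ be a Cholesky factor of $C-tI$ (so $C-tI=A(t)^\top A(t)$), with $i$-th column $a_i(t)$, and $M_t(x)=\sum_i x_i a_i(t)a_i(t)^\top$. $\mathbb{I}_s\in\mathbb{R}^n$ has first $s$ entries $1$ and the rest $0$. For a vector $y$, $y^\downarrow_i$ denotes its $i$-th largest entry. For $\mu,\nu\in\mathbb{R}^n$, $\mu\succ\nu$ ($\mu$ majorizes $\nu$) means $\sum_{i=1}^\ell\mu^\downarrow_i\ge\sum_{i=1}^\ell\nu^\downarrow_i$ for all $\ell\in\{1,\dots,n-1\}$ and $\sum_{i=1}^n\mu_i=\sum_{i=1}^n\nu_i$. *)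

From HB Require Import structures.
From mathcomp Require Import all_boot all_order all_algebra.
From mathcomp Require Import reals.
Set Implicit Arguments. Unset Strict Implicit. Unset Printing Implicit Defensive.
Import Order.TTheory GRing.Theory Num.Theory.
Local Open Scope ring_scope.

Section Defs.
Variable R : realType.

Definition sym_pd n (C : 'M[R]_n) : Prop :=
  C^T = C /\ forall v : 'cV[R]_n, v != 0 -> 0 < (v^T *m C *m v) 0 0.

Definition sorted_eigs n (M : 'M[R]_n) (mu : 'I_n -> R) : Prop :=
  (forall i j : 'I_n, (i <= j)%N -> mu j <= mu i) /\
  char_poly M = \prod_(i < n) ('X - (mu i)%:P).

Definition cholesky_factor n (D A : 'M[R]_n) : Prop :=
  D = A^T *m A /\ (forall i j : 'I_n, (j < i)%N -> A i j = 0) /\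
  (forall i : 'I_n, 0 <= A i i).

Definition Mx n (A : 'M[R]_n) (x : 'I_n -> R) : 'M[R]_n :=
  \sum_(i < n) x i *: (col i A *m (col i A)^T).

Definition ind n (s : nat) : 'I_n -> R := fun i => if (i < s)%N then 1 else 0.

Definition down n (y : 'I_n -> R) : seq R := sort (fun a b => b <= a) [seq y i | i <- enum 'I_n].

Definition psum n (y : 'I_n -> R) (l : nat) : R := \sum_(i < l) nth 0 (down y) i.

Definition majorizes n (mu nu : 'I_n -> R) : Prop :=
  (forall l : nat, (1 <= l <= n.-1)%N -> psum nu l <= psum mu l) /\
  \sum_(i < n) mu i = \sum_(i < n) nu i.

End Defs.

From HB Require Import structures.
From mathcomp Require Import all_boot all_order all_algebra fingroup perm.
From mathcomp Require Import reals.
From mathcomp.real_closed Require Import complex.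
Set Implicit Arguments. Unset Strict Implicit. Unset Printing Implicit Defensive.
Import Order.TTheory GRing.Theory Num.Theory.
Local Open Scope ring_scope.
Local Open Scope sesquilinear_scope.

(* Let [D = diag(x)^(1/2)].  As [char_poly (P Q) = char_poly (Q P)], the matrix
   [M_t(x) = A(t) diag(x) A(t)^T] has the spectrum of [D A(t)^T A(t) D = D (C - t I) D];
   hence [M_t1(x)] and [M_t2(x)] have the spectra of [H + (t2 - t1) diag(x)] and [H] for
   one Hermitian matrix [H].  Ky Fan's principle (the sum of the [l] largest eigenvalues of
   a Hermitian [H] is the maximum of [Re (tr (W H W^H))] over [l x n] matrices [W] with
   orthonormal rows) gives (ii), and Weyl's inequality, by the Courant-Fischer dimension
   count, gives (iii) because the eigenvalues [x_i] of [diag(x)] are at most [1].  For (i),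
   the sum of the [l] largest [x_i] is at most [min(l, s)], the corresponding sum for
   [I_s], and both sides have the same trace. *)

Section TopSums.
Variables (R : realType) (n : nat).
Implicit Types (x y w nu mu : 'I_n -> R) (l s : nat) (t : R).

Definition nonincreasing y : Prop := forall i j : 'I_n, (i <= j)%N -> y j <= y i.

Lemma size_down y : size (down y) = n.
Proof. by rewrite size_sort size_map size_enum_ord. Qed.

Lemma perm_down y : perm_eq (down y) [seq y i | i <- enum 'I_n].
Proof. by rewrite perm_sort. Qed.

Lemma nth_down_le y i j : (i <= j < n)%N -> nth 0 (down y) j <= nth 0 (down y) i.
Proof.
case/andP=> ij jn; apply: (sorted_leq_nth ge_trans ge_refl) => //.
- exact/sort_sorted/ge_total.
- by rewrite inE size_down (leq_ltn_trans ij).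
- by rewrite inE size_down.
Qed.

Lemma nth_down_mem y i : (i < n)%N -> exists j, nth 0 (down y) i = y j.
Proof.
move=> lt_in; have : nth 0 (down y) i \in down y by rewrite mem_nth ?size_down.
by rewrite (perm_mem (perm_down y)) => /mapP [j _ ->]; exists j.
Qed.

Lemma sum_down (f : R -> R) y :
  \sum_(j < n) f (y j) = \sum_(i < n) f (nth 0 (down y) i).
Proof.
rewrite -[LHS]big_enum -(big_map y xpredT) -(perm_big _ (perm_down y)) /=.
by rewrite (big_nth 0) size_down big_mkord.
Qed.

Lemma psum_sorted y l : nonincreasing y -> (l <= n)%N ->
  psum y l = \sum_(i < n | (i < l)%N) y i.
Proof.
move=> y_noninc le_ln; rewrite /psum.
have -> : down y = [seq y i | i <- enum 'I_n].
  rewrite /down sorted_sort //; first exact: ge_trans.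
  apply: (@homo_sorted _ _ y (fun i j : 'I_n => (i <= j)%N)) => //.
  by rewrite -(@sorted_map _ _ val leq) val_enum_ord iota_sorted.
rewrite (big_ord_widen n (fun i => nth 0 [seq y i | i <- enum 'I_n] i) le_ln).
by apply: eq_bigr => i _; rewrite (nth_map i) ?size_enum_ord // nth_ord_enum.
Qed.

Lemma psum_le_minn y l s : (forall i, 0 <= y i <= 1) -> \sum_i y i = s%:R ->
  (l <= n)%N -> psum y l <= (minn l s)%:R.
Proof.
move=> y01 sum_y le_ln.
have down_ge0 (i : 'I_n) : 0 <= nth 0 (down y) i.
  by have [j ->] := nth_down_mem y (ltn_ord i); case/andP: (y01 j).
rewrite /minn; case: ltnP => [_ | le_sl].
  apply: (@le_trans _ _ (\sum_(i < l) (1 : R))); last by rewrite sumr_const card_ord.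
  apply: ler_sum => i _.
  by have [j ->] := nth_down_mem y (leq_trans (ltn_ord i) le_ln); case/andP: (y01 j).
rewrite -sum_y (sum_down id) /psum (big_ord_widen n (nth 0 (down y)) le_ln).
by rewrite [leRHS](bigID (fun i : 'I_n => (i < l)%N)) /= lerDl sumr_ge0.
Qed.

(* With [th] the [l]-th largest entry, [y j * w j <= max (y j - th) 0 + th * w j],
   and these bounds sum to exactly [psum y l]. *)
Lemma weighted_sum_le_psum y w l : (forall j, 0 <= w j <= 1) ->
  \sum_j w j = l%:R -> (l <= n)%N -> \sum_j y j * w j <= psum y l.
Proof.
case: l => [|k] w01 sum_w le_ln.
  have w0 j : w j = 0 by apply: (psumr_eq0P _ sum_w) => // i _; case/andP: (w01 i).
  by rewrite /psum big_ord0 big1 // => j _; rewrite w0 mulr0.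
set th := nth 0 (down y) k; pose f z := if th <= z then z - th else 0.
have weighted_le j : y j * w j <= f (y j) + th * w j.
  rewrite -{1}(subrK th (y j)) mulrDl lerD2r /f; case/andP: (w01 j) => w0 w1.
  case: (leP th (y j)) => [le_th | lt_th].
    by apply: ler_piMr; rewrite ?subr_ge0.
  by rewrite nmulr_rle0 // subr_lt0.
have f_down (i : 'I_n) :
    f (nth 0 (down y) i) = if (i < k.+1)%N then nth 0 (down y) i - th else 0.
  rewrite /f; case: ltnP => [lt_ik | lt_ki].
    by rewrite ifT //; apply: nth_down_le; rewrite -ltnS lt_ik le_ln.
  case: ifP => // le_th; apply/eqP; rewrite subr_eq0 eq_le le_th andbT.
  by apply: nth_down_le; rewrite (ltnW lt_ki) ltn_ord.
apply: le_trans (ler_sum _ (fun j _ => weighted_le j)) _.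
rewrite big_split -mulr_sumr sum_w /= (sum_down f); under eq_bigr do rewrite f_down.
rewrite -big_mkcond /= -(big_ord_widen n (fun i => nth 0 (down y) i - th) le_ln).
by rewrite sumrB sumr_const card_ord mulr_natr subrK.
Qed.

Lemma nonincreasing_addr_ind y s t : 0 <= t -> nonincreasing y ->
  nonincreasing (fun i => y i + t * @ind R n s i).
Proof.
move=> t0 y_noninc i j le_ij; rewrite lerD ?y_noninc ?ler_wpM2l // /ind.
by case: ifP => [lt_js | _]; rewrite ?(leq_ltn_trans le_ij lt_js) //; case: ifP.
Qed.

Lemma sum_ind_lt l s : (l <= n)%N -> \sum_(i < n | (i < l)%N) @ind R n s i = (minn l s)%:R.
Proof.
move=> le_ln; rewrite /ind -big_mkcondr /=.
rewrite (eq_bigl (fun i : 'I_n => (i < minn l s)%N)) => [|i]; last by rewrite leq_min.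
rewrite -(big_ord_widen n (fun=> 1) (leq_trans (geq_minl l s) le_ln)).
by rewrite sumr_const card_ord.
Qed.

Lemma majorizes_add_ind nu mu x s (t1 t2 : R) :
  (s <= n)%N -> (forall i, 0 <= x i <= 1) -> \sum_i x i = s%:R ->
  0 <= t1 <= t2 -> nonincreasing nu -> nonincreasing mu ->
  (forall l, (l <= n)%N ->
     \sum_(i < n | (i < l)%N) nu i <= \sum_(i < n | (i < l)%N) mu i + (t2 - t1) * psum x l) ->
  \sum_i nu i = \sum_i mu i + (t2 - t1) * \sum_i x i ->
  majorizes (fun i => mu i + t2 * @ind R n s i) (fun i => nu i + t1 * @ind R n s i).
Proof.
move=> le_sn x01 sum_x /andP[t1_ge0 le_t12] nu_noninc mu_noninc top_sums trace_eq.
have t2_ge0 := le_trans t1_ge0 le_t12.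
have ind_sum l y t : (l <= n)%N ->
    \sum_(i < n | (i < l)%N) (y i + t * @ind R n s i)
    = \sum_(i < n | (i < l)%N) y i + t * (minn l s)%:R.
  by move=> le_ln; rewrite big_split -mulr_sumr sum_ind_lt.
split=> [l /andP[_ le_l_n1] | ].
  have le_ln : (l <= n)%N by rewrite (leq_trans le_l_n1) ?leq_pred.
  rewrite !psum_sorted ?ind_sum //; try exact: nonincreasing_addr_ind.
  apply: le_trans (lerD (top_sums l le_ln) (lexx _)) _.
  rewrite -addrA lerD2l -[t2 in leRHS](subrK t1) [leRHS]mulrDl lerD2r.
  by rewrite ler_wpM2l ?subr_ge0 ?psum_le_minn.
have sum_all (y : 'I_n -> R) : \sum_i y i = \sum_(i < n | (i < n)%N) y i.
  by apply: eq_bigl => i; rewrite ltn_ord.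
rewrite sum_all [RHS]sum_all !ind_sum // (minn_idPr le_sn) -!sum_all trace_eq sum_x.
by rewrite -addrA -mulrDl subrK.
Qed.

End TopSums.

Lemma mulmx_pid_mxE (F : pzRingType) m n r (A : 'M[F]_(m, n)) i j :
  (A *m pid_mx r) i j = if (j < r)%N then A i j else 0.
Proof.
rewrite mxE (bigD1 j) //= big1 => [|k neq_kj]; last first.
  by rewrite mxE val_eqE (negbTE neq_kj) mulr0.
by rewrite mxE eqxx addr0; case: ifP; rewrite ?mulr1 ?mulr0.
Qed.

Lemma mulmx_copid_mxE (F : pzRingType) m n r (A : 'M[F]_(m, n)) i j :
  (A *m copid_mx r) i j = if (j < r)%N then 0 else A i j.
Proof.
rewrite mxE (bigD1 j) //= big1 => [|k neq_kj]; last first.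
  by rewrite !mxE val_eqE (negbTE neq_kj) subrr mulr0.
by rewrite !mxE eqxx addr0 /= eqxx; case: ifP; rewrite ?subrr ?subr0 ?mulr0 ?mulr1.
Qed.

Lemma char_poly_mulC (F : idomainType) n (P Q : 'M[F]_n) :
  char_poly (P *m Q) = char_poly (Q *m P).
Proof.
rewrite /char_poly /char_poly_mx !map_mxM.
set Pp := map_mx polyC P; set Qp := map_mx polyC Q; set x : {poly F} := 'X.
pose B := block_mx 1%:M Pp Qp x%:M.
have eqQP : block_mx 1%:M 0 (- Qp) 1%:M *m B = block_mx 1%:M Pp 0 (x%:M - Qp *m Pp).
  by rewrite mulmx_block !mul1mx !mul0mx !addr0 mulmx1 !mulNmx addNr addrC.
have eqPQ : block_mx x%:M (- Pp) 0 1%:M *m B = block_mx (x%:M - Pp *m Qp) 0 Qp x%:M.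
  by rewrite mulmx_block !mul1mx !mul0mx !add0r mulmx1 !mulNmx scalar_mxC addrN addrC.
have := congr1 determinant eqQP.
rewrite det_mulmx det_lblock !det1 mul1r det_ublock det1 mul1r => detQP.
have := congr1 determinant eqPQ.
rewrite det_mulmx det_ublock det1 mulr1 det_lblock det_scalar detQP mul1r => detPQ.
apply: (@mulfI _ (x ^+ n)); first by rewrite expf_neq0 // polyX_eq0.
by rewrite detPQ mulrC.
Qed.

Lemma perm_eq_map_ord (T : eqType) n (f g : 'I_n -> T) :
  perm_eq [seq f i | i <- enum 'I_n] [seq g i | i <- enum 'I_n] ->
  exists s : 'S_n, forall i, f i = g (s i).
Proof.
move=> /(@tuple_permP _ _ [tuple f i | i < n] [tuple g i | i < n]) [s /val_inj fg].
by exists s => i; move/(congr1 (fun t => tnth t i)): fg; rewrite !tnth_mktuple.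
Qed.

Section HermitianSpectra.
Variable R : realType.
Local Notation toC := (real_complex R).

Definition sqnorm (z : R[i]) : R := complex.Re z ^+ 2 + complex.Im z ^+ 2.

Definition col_sqnorm m n (Y : 'M[R[i]]_(m, n)) (j : 'I_n) : R :=
  \sum_(i < m) sqnorm (Y i j).

Definition spectral_decomp n (H U : 'M[R[i]]_n) (d : 'I_n -> R) : Prop :=
  U \is unitarymx /\ H = U^t* *m diag_mx (\row_j toC (d j)) *m U.

Definition compression_tr m n (W : 'M[R[i]]_(m, n)) (H : 'M[R[i]]_n) : R :=
  complex.Re (\tr (W *m H *m W^t*)).

Lemma sqnormE (z : R[i]) : toC (sqnorm z) = z * z^*.
Proof. by rewrite add_Re2_Im2 normCK. Qed.

Lemma sqnorm_ge0 (z : R[i]) : 0 <= sqnorm z.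
Proof. by rewrite addr_ge0 ?sqr_ge0. Qed.

Lemma sqnorm_eq0 (z : R[i]) : (sqnorm z == 0) = (z == 0).
Proof.
rewrite paddr_eq0 ?sqr_ge0 // !sqrf_eq0.
by case: z => a b; rewrite eq_complex.
Qed.

Lemma sqnorm_real (r : R) : sqnorm (toC r) = r ^+ 2.
Proof. by rewrite /sqnorm /= expr0n addr0. Qed.

Lemma col_sqnorm_ge0 m n (Y : 'M[R[i]]_(m, n)) j : 0 <= col_sqnorm Y j.
Proof. exact/sumr_ge0/(fun i _ => sqnorm_ge0 _). Qed.

Lemma mxtrace_diag_conj m n (Y : 'M[R[i]]_(m, n)) (d : 'I_n -> R) :
  \tr (Y *m diag_mx (\row_j toC (d j)) *m Y^t*) = toC (\sum_j d j * col_sqnorm Y j).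
Proof.
rewrite /mxtrace rmorph_sum; under eq_bigr => i _ do rewrite mxE.
rewrite exchange_big; apply: eq_bigr => j _.
rewrite rmorphM rmorph_sum mulr_sumr; apply: eq_bigr => i _.
by rewrite mul_mx_diag !mxE /= sqnormE mulrAC mulrC.
Qed.

Lemma mxtrace_mul_trmxC m n (Y : 'M[R[i]]_(m, n)) :
  \tr (Y *m Y^t*) = toC (\sum_j col_sqnorm Y j).
Proof.
have := mxtrace_diag_conj Y (fun=> 1).
have -> : \row_j toC 1 = const_mx 1 :> 'rV[R[i]]_n.
  by apply/rowP => j; rewrite !mxE rmorph1.
by rewrite diag_const_mx mulmx1 => ->; under eq_bigr do rewrite mul1r.
Qed.

Lemma sum_col_sqnorm_unitary m n (W : 'M[R[i]]_(m, n)) :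
  W \is unitarymx -> \sum_j col_sqnorm W j = m%:R.
Proof.
move=> /unitarymxP W_unitary; apply: complexI.
by rewrite -mxtrace_mul_trmxC W_unitary mxtrace1 rmorph_nat.
Qed.

Lemma sum_col_sqnorm_mulmx_unitary m n (Y : 'M[R[i]]_(m, n)) (U : 'M[R[i]]_n) :
  U \is unitarymx -> \sum_j col_sqnorm (Y *m U) j = \sum_j col_sqnorm Y j.
Proof.
move=> U_unitary; apply: complexI; rewrite -!mxtrace_mul_trmxC trmx_mul map_mxM.
by rewrite mulmxA mulmxtVK.
Qed.

(* The diagonal entries of the Hermitian idempotent [W^t* W] lie in [0, 1]. *)
Lemma col_sqnorm_unitary_le1 m n (W : 'M[R[i]]_(m, n)) j :
  W \is unitarymx -> col_sqnorm W j <= 1.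
Proof.
move=> W_unitary; pose P := W^t* *m W.
have P_idem : P *m P = P by rewrite /P mulmxA mulmxtVK.
have P_herm a b : P a b = (P b a)^*.
  by rewrite !mxE rmorph_sum; apply: eq_bigr => k _; rewrite !mxE rmorphM /= conjCK mulrC.
have Pjj : P j j = toC (col_sqnorm W j).
  by rewrite mxE rmorph_sum /=; apply: eq_bigr => i _; rewrite sqnormE !mxE mulrC.
have col_sqnorm_sum : col_sqnorm W j = \sum_k sqnorm (P j k).
  apply: complexI; rewrite -Pjj -{1}P_idem mxE rmorph_sum /=.
  by apply: eq_bigr => k _; rewrite sqnormE -P_herm.
have : col_sqnorm W j ^+ 2 <= col_sqnorm W j.
  rewrite [leRHS]col_sqnorm_sum (bigD1 j) //= Pjj sqnorm_real lerDl.
  exact/sumr_ge0/(fun k _ => sqnorm_ge0 _).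
have := col_sqnorm_ge0 W j; rewrite le_eqVlt => /predU1P[<- _ | w_gt0]; first exact: ler01.
by rewrite expr2 ger_pMr.
Qed.

Lemma compression_tr_add_scale m n (W : 'M[R[i]]_(m, n)) (H H' : 'M[R[i]]_n) c :
  compression_tr W (H + toC c *: H') = compression_tr W H + c * compression_tr W H'.
Proof.
rewrite /compression_tr mulmxDr mulmxDl mxtraceD -scalemxAr -scalemxAl mxtraceZ raddfD /=.
by case: (\tr (W *m H' *m W^t*)) => a b; rewrite /= mul0r subr0.
Qed.

Lemma col_sqnorm_pid_mx m n (j : 'I_n) :
  col_sqnorm (pid_mx m : 'M[R[i]]_(m, n)) j = (j < m)%N%:R.
Proof.
rewrite /col_sqnorm (eq_bigr (fun i : 'I_m => (i == j :> nat)%:R)) => [|i _]; last first.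
  by rewrite mxE ltn_ord andbT; case: eqP; rewrite ?sqnorm_real ?expr1n ?expr0n.
case: ltnP => [lt_jm | le_mj]; last first.
  by rewrite big1 // => i _; case: eqP => // eq_ij; move: le_mj; rewrite -eq_ij leqNgt ltn_ord.
rewrite (bigD1 (Ordinal lt_jm)) //= eqxx big1 ?addr0 // => i /negbTE neq_ij.
by rewrite -val_eqE in neq_ij; rewrite neq_ij.
Qed.

Lemma col_sqnorm_row_eq0 n (v : 'rV[R[i]]_n) j : (col_sqnorm v j == 0) = (v 0 j == 0).
Proof. by rewrite /col_sqnorm big_ord1 sqnorm_eq0. Qed.

(* Dimension count: the spans of the first [i.+1] rows of [U1] and of the last
   [n - i] rows of [U2] must meet. *)
Lemma exists_row_low_high n (U1 U2 : 'M[R[i]]_n) (i : 'I_n) :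
  U1 \is unitarymx -> U2 \is unitarymx ->
  exists2 v : 'rV[R[i]]_n, v != 0 &
    (forall j : 'I_n, (i < j)%N -> col_sqnorm (v *m U1^t*) j = 0) /\
    (forall j : 'I_n, (j < i)%N -> col_sqnorm (v *m U2^t*) j = 0).
Proof.
move=> U1_unitary U2_unitary.
pose E1 := (pid_mx i.+1 : 'M[R[i]]_n) *m U1; pose E2 := (copid_mx i : 'M[R[i]]_n) *m U2.
have rank_E1 : \rank E1 = i.+1.
  by rewrite mxrankMfree ?row_free_unit ?unitarymx_unit // rank_pid_mx.
have rank_E2 : \rank E2 = (n - i)%N.
  by rewrite mxrankMfree ?row_free_unit ?unitarymx_unit // rank_copid_mx // ltnW.
have cap_neq0 : (E1 :&: E2)%MS != 0.
  rewrite -mxrank_eq0; apply/eqP => rank0.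
  have := mxrank_sum_cap E1 E2; rewrite rank0 addn0 rank_E1 rank_E2.
  rewrite addSn (subnKC (ltnW (ltn_ord i))) => rank_sum.
  by have := rank_leq_col (E1 + E2)%MS; rewrite rank_sum ltnn.
set v := nz_row (E1 :&: E2)%MS; exists v; first by rewrite nz_row_eq0.
have /submxP [y vE1] : (v <= E1)%MS := submx_trans (nz_row_sub _) (capmxSl E1 E2).
have /submxP [z vE2] : (v <= E2)%MS := submx_trans (nz_row_sub _) (capmxSr E1 E2).
split=> j lt_ij; apply/eqP; rewrite col_sqnorm_row_eq0; [rewrite vE1 | rewrite vE2].
  by rewrite mulmxA mulmxtVK // mulmx_pid_mxE ltnS leqNgt lt_ij.
by rewrite mulmxA mulmxtVK // mulmx_copid_mxE lt_ij.
Qed.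

Section SpectralDecomposition.
Variables (n : nat) (H U : 'M[R[i]]_n) (d : 'I_n -> R).
Hypothesis decompH : spectral_decomp H U d.
Let U_unitary : U \is unitarymx := decompH.1.

Lemma sum_col_sqnorm_eigenbasis m (W : 'M[R[i]]_(m, n)) :
  \sum_j col_sqnorm (W *m U^t*) j = \sum_j col_sqnorm W j.
Proof. by rewrite sum_col_sqnorm_mulmx_unitary // trmxC_unitary U_unitary. Qed.

Lemma mxtrace_spectral : \tr H = toC (\sum_j d j).
Proof.
case: decompH => _ ->.
rewrite mxtrace_mulC mulmxA (unitarymxP U_unitary) mul1mx mxtrace_diag rmorph_sum.
by apply: eq_bigr => j _; rewrite mxE.
Qed.

Lemma compression_tr_spectral m (W : 'M[R[i]]_(m, n)) :
  compression_tr W H = \sum_j d j * col_sqnorm (W *m U^t*) j.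
Proof.
case: decompH => _ ->; rewrite /compression_tr.
have -> : W *m (U^t* *m diag_mx (\row_j toC (d j)) *m U) *m W^t*
    = W *m U^t* *m diag_mx (\row_j toC (d j)) *m (W *m U^t*)^t*.
  by rewrite trmx_mul map_mxM trmxCK !mulmxA.
by rewrite mxtrace_diag_conj.
Qed.

Lemma compression_tr_le_psum m (W : 'M[R[i]]_(m, n)) : (m <= n)%N ->
  W \is unitarymx -> compression_tr W H <= psum d m.
Proof.
move=> le_mn W_unitary; rewrite compression_tr_spectral.
have WU_unitary : W *m U^t* \is unitarymx.
  by rewrite mul_unitarymx // trmxC_unitary U_unitary.
apply: weighted_sum_le_psum => //; last exact: sum_col_sqnorm_unitary.
by move=> j; rewrite col_sqnorm_ge0 col_sqnorm_unitary_le1.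
Qed.

Lemma compression_tr_top_eigenvectors m : (m <= n)%N ->
  exists2 W : 'M[R[i]]_(m, n), W \is unitarymx &
    compression_tr W H = \sum_(i < n | (i < m)%N) d i.
Proof.
move=> le_mn; exists (pid_mx m *m U).
  apply: mul_unitarymx U_unitary; apply/unitarymxP.
  by rewrite tr_pid_mx map_pid_mx mul_pid_mx minnn (minn_idPr le_mn) pid_mx_1.
rewrite compression_tr_spectral (mulmxtVK _ U_unitary).
rewrite [RHS]big_mkcond; apply: eq_bigr => j _.
by rewrite col_sqnorm_pid_mx; case: ifP; rewrite ?mulr1 ?mulr0.
Qed.

Lemma compression_tr_le_max m (W : 'M[R[i]]_(m, n)) b : (forall j, d j <= b) ->
  compression_tr W H <= b * \sum_j col_sqnorm W j.
Proof.
move=> d_le; rewrite compression_tr_spectral -sum_col_sqnorm_eigenbasis mulr_sumr.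
by apply: ler_sum => j _; rewrite ler_wpM2r ?col_sqnorm_ge0.
Qed.

Hypothesis d_noninc : nonincreasing d.

Lemma compression_tr_ge_eigen m (W : 'M[R[i]]_(m, n)) (i : 'I_n) :
  (forall j : 'I_n, (i < j)%N -> col_sqnorm (W *m U^t*) j = 0) ->
  d i * \sum_j col_sqnorm W j <= compression_tr W H.
Proof.
move=> W_low; rewrite compression_tr_spectral -sum_col_sqnorm_eigenbasis mulr_sumr.
apply: ler_sum => j _; case: (leqP j i) => [le_ji | lt_ij]; last by rewrite W_low ?mulr0.
by rewrite ler_wpM2r ?col_sqnorm_ge0 ?d_noninc.
Qed.

Lemma compression_tr_le_eigen m (W : 'M[R[i]]_(m, n)) (i : 'I_n) :
  (forall j : 'I_n, (j < i)%N -> col_sqnorm (W *m U^t*) j = 0) ->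
  compression_tr W H <= d i * \sum_j col_sqnorm W j.
Proof.
move=> W_high; rewrite compression_tr_spectral -sum_col_sqnorm_eigenbasis mulr_sumr.
apply: ler_sum => j _; case: (leqP i j) => [le_ij | lt_ji]; last by rewrite W_high ?mulr0.
by rewrite ler_wpM2r ?col_sqnorm_ge0 ?d_noninc.
Qed.

End SpectralDecomposition.

Lemma hermitian_spectral_decomp n (H : 'M[R[i]]_n) (lam : 'I_n -> R) :
  H^t* = H -> char_poly H = \prod_(i < n) ('X - (toC (lam i))%:P) ->
  exists U, spectral_decomp H U lam.
Proof.
move=> H_herm charH.
have /orthomx_spectralP H_diag : H \is normalmx by apply/normalmxP; rewrite H_herm.
set P := spectralmx H in H_diag; set dd := spectral_diag H in H_diag.
have P_unitary : P \is unitarymx by exact: spectral_unitarymx.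
have char_dd : char_poly H = \prod_(i < n) ('X - (dd 0 i)%:P).
  rewrite H_diag char_poly_mulC mulmxA mulmxV ?unitarymx_unit // mul1mx.
  by rewrite char_poly_trig ?diag_mx_is_trig //; apply: eq_bigr => i _; rewrite mxE eqxx.
have [s dd_lam] : exists s : 'S_n, forall i, dd 0 i = toC (lam (s i)).
  apply: (perm_eq_map_ord (f := fun i => dd 0 i) (g := fun i => toC (lam i))).
  apply: prod_XsubC_eq; rewrite !big_map.
  exact: etrans (esym char_dd) charH.
have dd_perm : diag_mx dd = perm_mx s *m diag_mx (\row_j toC (lam j)) *m (perm_mx s)^T.
  rewrite tr_perm_mx -row_permE -col_permE; apply/matrixP => i j.
  by rewrite !mxE dd_lam (inj_eq perm_inj); case: eqP => // ->.
exists ((perm_mx s)^T *m P); split.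
  rewrite mul_unitarymx // trmx_unitary; apply/unitarymxP.
  by rewrite tr_perm_mx map_perm_mx -perm_mxM mulgV perm_mx1.
by rewrite {1}H_diag invmx_unitary // dd_perm trmx_mul map_mxM trmxK map_perm_mx !mulmxA.
Qed.

Section Perturbation.
Variables (n : nat) (H1 H2 H3 U1 U2 U3 : 'M[R[i]]_n) (nu mu e : 'I_n -> R) (c : R).
Hypotheses (decomp1 : spectral_decomp H1 U1 nu) (decomp2 : spectral_decomp H2 U2 mu).
Hypothesis decomp3 : spectral_decomp H3 U3 e.
Hypotheses (H1E : H1 = H2 + toC c *: H3) (c_ge0 : 0 <= c).

Lemma sum_spectrum_perturb : \sum_i nu i = \sum_i mu i + c * \sum_i e i.
Proof.
apply: complexI; rewrite rmorphD rmorphM /= -(mxtrace_spectral decomp1).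
by rewrite -(mxtrace_spectral decomp2) -(mxtrace_spectral decomp3) H1E mxtraceD mxtraceZ.
Qed.

Lemma ky_fan_perturb l : nonincreasing mu -> (l <= n)%N ->
  \sum_(i < n | (i < l)%N) nu i <= \sum_(i < n | (i < l)%N) mu i + c * psum e l.
Proof.
move=> mu_noninc le_ln; have [W W_unitary <-] := compression_tr_top_eigenvectors decomp1 le_ln.
rewrite H1E compression_tr_add_scale -(psum_sorted mu_noninc le_ln) lerD ?ler_wpM2l //.
  exact: (compression_tr_le_psum decomp2).
exact: (compression_tr_le_psum decomp3).
Qed.

Lemma weyl_perturb i : nonincreasing nu -> nonincreasing mu -> (forall j, e j <= 1) ->
  nu i <= mu i + c.
Proof.
move=> nu_noninc mu_noninc e_le1.
have [U1_unitary U2_unitary] := (decomp1.1, decomp2.1).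
have [v v_neq0 [v_low v_high]] := exists_row_low_high i U1_unitary U2_unitary.
set N := \sum_j col_sqnorm v j.
have N_gt0 : 0 < N.
  rewrite lt_def sumr_ge0 ?andbT => [|j _]; last exact: col_sqnorm_ge0.
  apply: contra v_neq0 => /eqP/(psumr_eq0P (fun j _ => col_sqnorm_ge0 v j)) N0.
  by apply/eqP/rowP => j; apply/eqP; rewrite mxE -col_sqnorm_row_eq0 N0.
rewrite -(ler_pM2r N_gt0) mulrDl.
apply: le_trans (compression_tr_ge_eigen decomp1 nu_noninc v_low) _.
rewrite H1E compression_tr_add_scale lerD ?(compression_tr_le_eigen decomp2 mu_noninc v_high) //.
rewrite ler_wpM2l //.
by apply: le_trans (compression_tr_le_max decomp3 v e_le1) _; rewrite mul1r.
Qed.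

End Perturbation.

Section RealSymmetric.
Variable n : nat.
Local Notation diagr x := (diag_mx (\row_i x i) : 'M[R]_n).
Local Notation sqrt_diag x := (diag_mx (\row_i Num.sqrt (x i)) : 'M[R]_n).

Lemma real_sym_spectral_decomp (S : 'M[R]_n) (lam : 'I_n -> R) :
  S^T = S -> char_poly S = \prod_(i < n) ('X - (lam i)%:P) ->
  exists U, spectral_decomp (map_mx toC S) U lam.
Proof.
move=> S_sym charS; apply: hermitian_spectral_decomp.
  apply/matrixP => i j; rewrite !mxE conj_Creal ?complex_real //.
  by rewrite -{2}S_sym mxE.
rewrite -map_char_poly charS rmorph_prod; apply: eq_bigr => i _.
exact: map_polyXsubC.
Qed.

Lemma spectral_decomp_diag (x : 'I_n -> R) : spectral_decomp (map_mx toC (diagr x)) 1%:M x.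
Proof.
split; first by apply/unitarymxP; rewrite trmx1 map_mx1 mulmx1.
rewrite trmx1 map_mx1 mul1mx mulmx1; apply/matrixP => i j.
by rewrite !mxE rmorphMn.
Qed.

Lemma MxE (A : 'M[R]_n) (x : 'I_n -> R) : Mx A x = A *m diagr x *m A^T.
Proof.
rewrite /Mx mul_mx_diag; apply/matrixP => j k; rewrite summxE !mxE.
by apply: eq_bigr => i _; rewrite !mxE big_ord1 !mxE mulrA [x i * _]mulrC.
Qed.

Lemma sqrt_diagK (x : 'I_n -> R) : (forall i, 0 <= x i) ->
  sqrt_diag x *m sqrt_diag x = diagr x.
Proof.
move=> x_ge0; rewrite mul_mx_diag; apply/matrixP => j k; rewrite !mxE.
by case: eqP => [->|_]; rewrite ?mulr0n ?mul0r // !mulr1n -expr2 sqr_sqrtr.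
Qed.

Lemma sqrt_diag_conj_shift (x : 'I_n -> R) (D : 'M[R]_n) c : (forall i, 0 <= x i) ->
  sqrt_diag x *m (D + c%:M) *m sqrt_diag x
  = sqrt_diag x *m D *m sqrt_diag x + c *: diagr x.
Proof.
by move=> x_ge0; rewrite mulmxDr mulmxDl mul_mx_scalar -scalemxAl sqrt_diagK.
Qed.

Lemma spectral_decomp_Mx (A : 'M[R]_n) (x nu : 'I_n -> R) : (forall i, 0 <= x i) ->
  char_poly (Mx A x) = \prod_(i < n) ('X - (nu i)%:P) ->
  exists U, spectral_decomp (map_mx toC (sqrt_diag x *m (A^T *m A) *m sqrt_diag x)) U nu.
Proof.
move=> x_ge0 char_nu; apply: real_sym_spectral_decomp.
  by rewrite !trmx_mul trmxK tr_diag_mx !mulmxA.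
rewrite -char_nu MxE -sqrt_diagK // !mulmxA char_poly_mulC !mulmxA.
by rewrite -[A *m _ *m _ *m A^T]mulmxA char_poly_mulC !mulmxA.
Qed.

End RealSymmetric.

End HermitianSpectra.

Theorem lemma1 (R : realType) (n s : nat) (C : 'M[R]_n) (x : 'I_n -> R)
    (lamC : 'I_n -> R) (t1 t2 : R) (A1 A2 : 'M[R]_n) (nu mu : 'I_n -> R) :
  (1 <= n)%N -> (1 <= s <= n)%N ->
  sym_pd C ->
  (forall i, 0 <= x i <= 1) -> \sum_(i < n) x i = s%:R ->
  sorted_eigs C lamC ->
  0 <= t1 -> t1 <= t2 -> (forall i, t2 <= lamC i) ->
  cholesky_factor (C - t1%:M) A1 -> cholesky_factor (C - t2%:M) A2 ->
  sorted_eigs (Mx A1 x) nu -> sorted_eigs (Mx A2 x) mu ->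
  [/\ majorizes (fun i => mu i + t2 * @ind R n s i) (fun i => nu i + t1 * @ind R n s i),
      (forall l : nat, (1 <= l <= s)%N ->
         \sum_(i < n | (i < l)%N) mu i + (t2 - t1) * psum x l
           >= \sum_(i < n | (i < l)%N) nu i)
    & (forall i : 'I_n, (i < s)%N -> mu i + t2 - t1 >= nu i)].
Proof.
(* Positive definiteness of [C] and [t2 <= lambda_min(C)] only serve to make the
   Cholesky factors exist; here they are given. *)
move=> _ /andP[_ le_sn] _ x01 sum_x _ t1_ge0 le_t12 _ [chol1 _] [chol2 _].
move=> [nu_noninc char_nu] [mu_noninc char_mu].
have x_ge0 i : 0 <= x i by case/andP: (x01 i).
have c_ge0 : 0 <= t2 - t1 by rewrite subr_ge0.
have [U1 decomp1] := spectral_decomp_Mx x_ge0 char_nu.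
have [U2 decomp2] := spectral_decomp_Mx x_ge0 char_mu.
have decomp3 := spectral_decomp_diag x.
have gram_shift : A1^T *m A1 = A2^T *m A2 + (t2 - t1)%:M.
  by rewrite -chol1 -chol2 raddfB /= addrA subrK.
set D := diag_mx (\row_i Num.sqrt (x i)).
have H1E : map_mx (real_complex R) (D *m (A1^T *m A1) *m D)
    = map_mx (real_complex R) (D *m (A2^T *m A2) *m D)
      + real_complex R (t2 - t1) *: map_mx (real_complex R) (diag_mx (\row_i x i)).
  by rewrite gram_shift sqrt_diag_conj_shift // map_mxD map_mxZ.
have ky_fan := ky_fan_perturb decomp1 decomp2 decomp3 H1E c_ge0.
split.
- apply: majorizes_add_ind => //; first by rewrite t1_ge0.
    by move=> l; apply: ky_fan.
  by rewrite (sum_spectrum_perturb decomp1 decomp2 decomp3 H1E).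
- by move=> l /andP[_ le_ls]; apply: ky_fan; rewrite ?(leq_trans le_ls).
- move=> i _; rewrite -addrA.
  apply: (weyl_perturb decomp1 decomp2 decomp3 H1E c_ge0) => // j.
  by case/andP: (x01 j).
Qed.
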